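(* For positive integers $m, r$ with $r$ even and $m \geq 4$, $C_m(r) = 3$.
   Context: For positive integers $m, r$, $C_m(r)$ is the minimum odd positive integer $n$ such that there exist vectors $v_1, \ldots, v_n \in \mathbb{Z}^m$ (not necessarily distinct) with $|v_i| = \sqrt{r}$ for every $i$ and $v_1 + \cdots + v_n = \mathbf{0}$; if no such odd $n$ exists, $C_m(r) = 0$. Here $|\cdot|$ is the Euclidean norm. *)

From mathcomp Require Import all_boot all_order all_algebra.
From Stdlib Require Import ClassicalEpsilon.
Set Implicit Arguments. Unset Strict Implicit. Unset Printing Implicit Defensive.
Import Order.TTheory GRing.Theory Num.Theory.
Local Open Scope ring_scope.

Definition sqnorm (m : nat) (v : 'I_m -> int) : int := \sum_(j < m) v j ^+ 2.

Definition zero_sum_config (m r n : nat) : Prop :=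
  exists v : 'I_n -> 'I_m -> int,
    (forall i, sqnorm (v i) = r%:Z) /\ (forall j : 'I_m, \sum_(i < n) v i j = 0).

Definition decide (P : Prop) : bool :=
  if excluded_middle_informative P then true else false.

Definition odd_config (m r : nat) : pred nat :=
  fun n => odd n && decide (zero_sum_config m r n).

(* C_m(r): least odd positive n with such a configuration, or 0 if none.
   (odd n already implies n > 0.) *)
Definition C (m r : nat) : nat :=
  match excluded_middle_informative (exists n, odd_config m r n) with
  | left H => ex_minn H
  | right _ => 0%N
  end.

(* Write r = 2k.  By Lagrange's four-square theorem k = |q|^2 for an integral
   quaternion q, and then q(1 - i), q(i - j), q(j - 1) are three vectors of Z^4
   of squared norm 2|q|^2 = r summing to 0; zero padding moves them into Z^m.
   A single vector summing to 0 is 0, so no smaller odd count works.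
   Lagrange's theorem follows by Euler's descent: an odd prime p divides some
   x^2 + y^2 + 1 with x, y <= (p - 1)/2 (pigeonhole on the squares of F_p), and
   if Mp is a sum of four squares with 1 < M < p, reducing its roots to centred
   residues mod M and applying Euler's four-square identity makes rp one for
   some 0 < r < M. *)

From mathcomp Require Import all_boot all_order all_algebra zify ring.
From Stdlib Require Import ClassicalEpsilon.
Set Implicit Arguments. Unset Strict Implicit. Unset Printing Implicit Defensive.
Import Order.TTheory GRing.Theory Num.Theory.

Lemma injective_images_meet (T U : finType) (f g : T -> U) :
  injective f -> injective g -> #|U| < #|T| + #|T| -> exists x y, f x = g y.
Proof.
move=> f_inj g_inj card_lt.
have [/existsP[x /existsP[y /eqP fg]] | disj] := boolP [exists x, exists y, f x == g y].
  by exists x, y.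
have fg x y : f x <> g y.
  by move=> fg; case/negP: disj; apply/existsP; exists x; apply/existsP; exists y; apply/eqP.
pose h (s : T + T) := match s with inl x => f x | inr y => g y end.
suff h_inj : injective h by have := leq_card _ h_inj; rewrite card_sum leqNgt card_lt.
case=> [x|y] [x'|y'] /= e.
- by rewrite (f_inj _ _ e).
- by case: (fg _ _ e).
- by case: (fg _ _ (esym e)).
- by rewrite (g_inj _ _ e).
Qed.

Section OddPrime.

Variable p : nat.
Hypotheses (p_prime : prime p) (p_odd : odd p).

Let p_half : p = (p./2).*2.+1.
Proof. by rewrite -[LHS]odd_double_half p_odd. Qed.

Lemma sqr_Fp_inj (x y : nat) : x <= p./2 -> y <= p./2 ->
  (x%:R ^+ 2 = y%:R ^+ 2 :> 'F_p)%R -> x = y.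
Proof.
move=> x_le y_le /eqP; rewrite eqf_sqr => /orP[/eqP xy | /eqP xNy].
  by have := congr1 (@nat_of_ord _) xy; rewrite !val_Fp_nat // !modn_small //; lia.
have : p %| x + y by rewrite (dvdn_pcharf (pchar_Fp p_prime)) natrD xNy addNr.
have [xy0 | xy_gt0] := posnP (x + y); first lia.
by move/(dvdn_leq xy_gt0); lia.
Qed.

Lemma exists_dvd_sqr_add_sqr_add1 :
  exists x y, [/\ x <= p./2, y <= p./2 & p %| x ^ 2 + y ^ 2 + 1].
Proof.
pose f (x : 'I_(p./2).+1) : 'F_p := (x%:R ^+ 2)%R.
pose g (y : 'I_(p./2).+1) : 'F_p := (- 1 - y%:R ^+ 2)%R.
have ord_le (x : 'I_(p./2).+1) : x <= p./2 by rewrite -ltnS.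
have f_inj : injective f by move=> x y /sqr_Fp_inj xy; apply/val_inj/xy.
have g_inj : injective g by move=> x y /addrI /oppr_inj /f_inj.
have [|x [y fg]] := injective_images_meet f_inj g_inj.
  by rewrite card_Fp // card_ord {1}p_half; lia.
exists x, y; split; rewrite ?ord_le // (dvdn_pcharf (pchar_Fp p_prime)).
by rewrite !natrD !natrX; move: fg; rewrite /f /g => ->; apply/eqP; ring.
Qed.

Lemma sqr_add_sqr_add1_lt (x y : nat) :
  x <= p./2 -> y <= p./2 -> x ^ 2 + y ^ 2 + 1 < p * p.
Proof.
have p_gt1 := prime_gt1 p_prime.
move: p_gt1; rewrite p_half; move: (p./2) => h; rewrite -mul2n -!mulnn => p_gt1 x_le y_le.
by have := leq_mul x_le x_le; have := leq_mul y_le y_le; nia.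
Qed.

End OddPrime.

Local Open Scope ring_scope.

Definition sum_of_four_squares (n : int) : Prop :=
  exists a b c d : int, n = a ^+ 2 + b ^+ 2 + c ^+ 2 + d ^+ 2.

Lemma sum_of_four_squaresM (x y : int) :
  sum_of_four_squares x -> sum_of_four_squares y -> sum_of_four_squares (x * y).
Proof.
move=> [x1 [x2 [x3 [x4 ->]]]] [y1 [y2 [y3 [y4 ->]]]].
exists (x1 * y1 + x2 * y2 + x3 * y3 + x4 * y4), (x1 * y2 - x2 * y1 + x3 * y4 - x4 * y3),
  (x1 * y3 - x3 * y1 + x4 * y2 - x2 * y4), (x1 * y4 - x4 * y1 + x2 * y3 - x3 * y2).
ring.
Qed.

Lemma centered_residue (M x : int) : 0 < M -> exists q, - M < 2 * (x - M * q) <= M.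
Proof.
move=> M_gt0; have M_neq0 := lt0r_neq0 M_gt0.
have := divz_eq x M; have := modz_ge0 x M_neq0; have := ltz_pmod x M_gt0.
set q := (x %/ M)%Z; set s := (x %% M)%Z => ? ? ?.
by case: (lerP (2 * s) M) => ?; [exists q | exists (q + 1)]; lia.
Qed.

Lemma prime_no_proper_dvdz (p : nat) (M : int) :
  prime p -> 1 < M < p%:Z -> ~~ (M %| p%:Z)%Z.
Proof.
move=> /primeP[_ p_div] M_bounds; rewrite dvdzE /=.
by apply/negP => /p_div /orP[] /eqP; lia.
Qed.

Lemma centered_sqr_leif (M y : int) :
  - M < 2 * y <= M -> 4 * y ^+ 2 <= M ^+ 2 ?= iff (2 * y == M).
Proof.
rewrite !expr2 => /andP[? ?]; split; first nia.
by apply/eqP/eqP => ?; nia.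
Qed.

Section FourSquaresDescent.

Variables (p : nat) (M q1 q2 q3 q4 y1 y2 y3 y4 : int).
Hypotheses (p_prime : prime p) (M_bounds : 1 < M < p%:Z)
  (Mp_sum : M * p%:Z = (M * q1 + y1) ^+ 2 + (M * q2 + y2) ^+ 2
                       + (M * q3 + y3) ^+ 2 + (M * q4 + y4) ^+ 2).
Hypotheses (y1_centered : - M < 2 * y1 <= M) (y2_centered : - M < 2 * y2 <= M)
  (y3_centered : - M < 2 * y3 <= M) (y4_centered : - M < 2 * y4 <= M).

Let r := p%:Z - M * (q1 ^+ 2 + q2 ^+ 2 + q3 ^+ 2 + q4 ^+ 2)
  - 2 * (q1 * y1 + q2 * y2 + q3 * y3 + q4 * y4).

Let M_gt0 : 0 < M. Proof. by case/andP: M_bounds => /(lt_trans ltr01). Qed.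

Lemma sum_residue_sqr : y1 ^+ 2 + y2 ^+ 2 + y3 ^+ 2 + y4 ^+ 2 = M * r.
Proof.
have -> : M * r = M * p%:Z - M * (M * (q1 ^+ 2 + q2 ^+ 2 + q3 ^+ 2 + q4 ^+ 2)
  + 2 * (q1 * y1 + q2 * y2 + q3 * y3 + q4 * y4)) by rewrite /r; ring.
by rewrite Mp_sum; ring.
Qed.

Lemma descent_factor_gt0 : 0 < r.
Proof.
have : 0 <= M * r by rewrite -sum_residue_sqr !addr_ge0 ?sqr_ge0.
rewrite lt0r pmulr_rge0 // => -> ; rewrite andbT.
apply/contraNneq: (prime_no_proper_dvdz p_prime M_bounds) => r0.
have : y1 ^+ 2 + y2 ^+ 2 + y3 ^+ 2 + y4 ^+ 2 == 0 by rewrite sum_residue_sqr r0 mulr0.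
rewrite !paddr_eq0 ?addr_ge0 ?sqr_ge0 // !sqrf_eq0.
case/andP=> /andP[/andP[/eqP y1_0 /eqP y2_0] /eqP y3_0] /eqP y4_0.
apply/dvdzP; exists (q1 ^+ 2 + q2 ^+ 2 + q3 ^+ 2 + q4 ^+ 2).
apply: (mulfI (lt0r_neq0 M_gt0)); rewrite Mp_sum y1_0 y2_0 y3_0 y4_0.
ring.
Qed.

Lemma descent_factor_ltM : r < M.
Proof.
have := leifD (leifD (leifD (centered_sqr_leif y1_centered)
  (centered_sqr_leif y2_centered)) (centered_sqr_leif y3_centered))
  (centered_sqr_leif y4_centered).
have -> : 4 * y1 ^+ 2 + 4 * y2 ^+ 2 + 4 * y3 ^+ 2 + 4 * y4 ^+ 2 = 4 * M * r.
  by rewrite -mulrA -sum_residue_sqr; ring.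
have -> : M ^+ 2 + M ^+ 2 + M ^+ 2 + M ^+ 2 = 4 * M * M by ring.
have M4_gt0 : 0 < 4 * M by rewrite mulr_gt0.
case; rewrite ler_pM2l // => r_leM /esym all_half; rewrite lt_neqAle r_leM andbT.
apply/contraNneq: (prime_no_proper_dvdz p_prime M_bounds) => rM.
move: all_half; rewrite rM eqxx.
case/andP=> /andP[/andP[/eqP y1_half /eqP y2_half] /eqP y3_half] /eqP y4_half.
(* With 2 y_i = M, 4 M p = M^2 (sum of the (2 q_i + 1)^2). *)
apply/dvdzP; exists (q1 ^+ 2 + q1 + q2 ^+ 2 + q2 + q3 ^+ 2 + q3 + q4 ^+ 2 + q4 + 1).
apply: (mulfI (lt0r_neq0 M4_gt0)).
have -> : 4 * M * p%:Z = (2 * M * q1 + 2 * y1) ^+ 2 + (2 * M * q2 + 2 * y2) ^+ 2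
  + (2 * M * q3 + 2 * y3) ^+ 2 + (2 * M * q4 + 2 * y4) ^+ 2 by rewrite -mulrA Mp_sum; ring.
by rewrite y1_half y2_half y3_half y4_half; ring.
Qed.

Lemma descent_factor_mul_sum_of_four_squares : sum_of_four_squares (r * p%:Z).
Proof.
(* Euler's identity for the roots M q_i + y_i of M p and the roots y_i of M r
   has all four terms divisible by M; the w_i are the quotients. *)
pose w1 := r + (q1 * y1 + q2 * y2 + q3 * y3 + q4 * y4).
pose w2 := q1 * y2 - q2 * y1 + q4 * y3 - q3 * y4.
pose w3 := q1 * y3 - q3 * y1 + q2 * y4 - q4 * y2.
pose w4 := q1 * y4 - q4 * y1 + q3 * y2 - q2 * y3.
exists w1, w2, w3, w4; apply: (mulfI (lt0r_neq0 (mulr_gt0 M_gt0 M_gt0))).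
have Mw1 : M * w1 = (M * q1 + y1) * y1 + (M * q2 + y2) * y2
                    + (M * q3 + y3) * y3 + (M * q4 + y4) * y4.
  by rewrite mulrDr -sum_residue_sqr; ring.
transitivity ((M * r) * (M * p%:Z)); first by ring.
rewrite -sum_residue_sqr Mp_sum.
transitivity ((M * w1) ^+ 2 + (M * w2) ^+ 2 + (M * w3) ^+ 2 + (M * w4) ^+ 2); last by ring.
by rewrite Mw1 /w2 /w3 /w4; ring.
Qed.

Lemma descent_factor_exists :
  exists2 r : int, 0 < r < M & sum_of_four_squares (r * p%:Z).
Proof.
exists r; last exact: descent_factor_mul_sum_of_four_squares.
by rewrite descent_factor_gt0 descent_factor_ltM.
Qed.

End FourSquaresDescent.

Lemma sum_of_four_squares_descent (p m : nat) :
  prime p -> (1 < m < p)%N -> sum_of_four_squares (m%:Z * p%:Z) ->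
  exists2 k : nat, (0 < k < m)%N & sum_of_four_squares (k%:Z * p%:Z).
Proof.
move=> p_prime m_bounds [x1 [x2 [x3 [x4 mp_sum]]]].
have mZ_bounds : 1 < m%:Z < p%:Z by rewrite !ltz_nat.
have mZ_gt0 : 0 < m%:Z by rewrite ltz_nat; lia.
have [q1 c1] := centered_residue x1 mZ_gt0; have [q2 c2] := centered_residue x2 mZ_gt0.
have [q3 c3] := centered_residue x3 mZ_gt0; have [q4 c4] := centered_residue x4 mZ_gt0.
have mp_split : m%:Z * p%:Z =
    (m%:Z * q1 + (x1 - m%:Z * q1)) ^+ 2 + (m%:Z * q2 + (x2 - m%:Z * q2)) ^+ 2
  + (m%:Z * q3 + (x3 - m%:Z * q3)) ^+ 2 + (m%:Z * q4 + (x4 - m%:Z * q4)) ^+ 2.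
  by rewrite mp_sum; ring.
have [r /andP[r_gt0 r_ltm] rp_sum] :=
  descent_factor_exists p_prime mZ_bounds mp_split c1 c2 c3 c4.
have r_ge0 := ltW r_gt0.
exists `|r|%N; last by rewrite gez0_abs.
by rewrite absz_gt0 (lt0r_neq0 r_gt0) -ltz_nat gez0_abs.
Qed.

Lemma sum_of_four_squares_prime_mul (p m : nat) :
  prime p -> (0 < m < p)%N -> sum_of_four_squares (m%:Z * p%:Z) ->
  sum_of_four_squares p%:Z.
Proof.
move=> p_prime; elim/ltn_ind: m => m IHm m_bounds mp_sum.
have [m1 | m_neq1] := eqVneq m 1%N; first by rewrite m1 mul1r in mp_sum.
have [|k k_bounds kp_sum] := sum_of_four_squares_descent p_prime _ mp_sum; first lia.
by apply: (IHm k) => //; lia.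
Qed.

Lemma sum_of_four_squares_prime (p : nat) : prime p -> sum_of_four_squares p%:Z.
Proof.
move=> p_prime; have [-> | p_odd] := even_prime p_prime; first by exists 1, 1, 0, 0.
have [x [y [x_le y_le p_dvd]]] := exists_dvd_sqr_add_sqr_add1 p_prime p_odd.
have p_gt0 := prime_gt0 p_prime.
have sum_lt := sqr_add_sqr_add1_lt p_prime p_odd x_le y_le.
apply: (@sum_of_four_squares_prime_mul _ ((x ^ 2 + y ^ 2 + 1) %/ p) p_prime).
  by rewrite divn_gt0 // ltn_divLR // sum_lt andbT (dvdn_leq _ p_dvd) // addn1.
by rewrite -PoszM divnK //; exists x%:Z, y%:Z, 1, 0; lia.
Qed.

Lemma sum_of_four_squares_nat (n : nat) : sum_of_four_squares n%:Z.
Proof.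
elim/ltn_ind: n => n IHn.
have [n_le1 | n_gt1] := leqP n 1.
  by case: n n_le1 {IHn} => [|[|]] // _; [exists 0, 0, 0, 0 | exists 1, 0, 0, 0].
have pdiv_n_prime := pdiv_prime n_gt1.
rewrite -(divnK (pdiv_dvd n)) PoszM.
apply: sum_of_four_squaresM; last exact: sum_of_four_squares_prime.
by apply: IHn; rewrite ltn_Pdiv ?prime_gt1 //; lia.
Qed.

Lemma zero_sum_config_padr (m k r n : nat) :
  zero_sum_config m r n -> zero_sum_config (m + k) r n.
Proof.
case=> v [v_norm v_sum].
pose pad i (j : 'I_(m + k)) := if split j is inl j' then v i j' else 0.
have split_lshift (j : 'I_m) : split (lshift k j) = inl j := unsplitK (inl j).
have split_rshift (j : 'I_k) : split (rshift m j) = inr j := unsplitK (inr j).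
exists pad; split => [i | j].
  rewrite /sqnorm big_split_ord /= [X in _ + X]big1 => [|j _].
    by rewrite addr0 -(v_norm i); apply: eq_bigr => j _; rewrite /pad split_lshift.
  by rewrite /pad split_rshift expr0n.
by rewrite /pad; case: (split j) => [j'|_]; [exact: v_sum | exact: big1].
Qed.

(* Row i holds the coordinates in (1, i, j, k) of q e_i, where q = a + bi + cj + dk
   and (e_0, e_1, e_2) = (1 - i, i - j, j - 1). *)
Definition quaternion_triangle (a b c d : int) (i : 'I_3) (j : 'I_4) : int :=
  match val i, val j with
  | 0, 0 => a + b   | 0, 1 => b - a   | 0, 2 => c - d   | 0, _ => c + d
  | 1, 0 => c - b   | 1, 1 => a + d   | 1, 2 => d - a   | 1, _ => - b - c
  | _, 0 => - a - c | _, 1 => - b - d | _, 2 => a - c   | _, _ => b - d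
  end.

Lemma zero_sum_config_4_3 (r : nat) : ~~ odd r -> zero_sum_config 4 r 3.
Proof.
move=> r_even; have [a [b [c [d abcd]]]] := sum_of_four_squares_nat r./2.
exists (quaternion_triangle a b c d); split => [i | j].
  have -> : r%:Z = 2 * (a ^+ 2 + b ^+ 2 + c ^+ 2 + d ^+ 2).
    by rewrite -abcd -[r in LHS]odd_double_half (negbTE r_even) add0n -mul2n PoszM.
  rewrite /sqnorm !big_ord_recl big_ord0 /quaternion_triangle.
  by case: i => [[|[|[|i]]] ?] //=; ring.
rewrite !big_ord_recl big_ord0 /quaternion_triangle.
by case: j => [[|[|[|[|j]]]] ?] //=; ring.
Qed.

Lemma zero_sum_config1 (m r : nat) : zero_sum_config m r 1 -> r = 0%N.
Proof.
case=> v [v_norm v_sum]; apply/eqP; rewrite -eqz_nat -(v_norm ord0).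
by rewrite /sqnorm big1 // => j _; move: (v_sum j); rewrite big_ord1 => ->; rewrite expr0n.
Qed.

Lemma decideP (P : Prop) : reflect P (decide P).
Proof. by rewrite /decide; case: excluded_middle_informative => ?; constructor. Qed.

Lemma C_eq (m r n : nat) :
  odd_config m r n -> (forall k, odd_config m r k -> n <= k)%N -> C m r = n.
Proof.
move=> n_config n_min; rewrite /C.
case: excluded_middle_informative => [ex | []]; last by exists n.
case: ex_minnP => k k_config k_min.
by apply/eqP; rewrite eqn_leq k_min // n_min.
Qed.

Theorem lemma4 (m r : nat) : (0 < r)%N -> ~~ odd r -> (4 <= m)%N -> C m r = 3%N.
Proof.
move=> r_gt0 r_even m_ge4.
apply: C_eq => [|k /andP[k_odd /decideP k_config]].
  apply/decideP; rewrite -(subnKC m_ge4).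
  exact: zero_sum_config_padr (zero_sum_config_4_3 r_even).
case: k k_odd k_config => [|[|[|k]]] // _ /zero_sum_config1 r0.
by rewrite r0 in r_gt0.
Qed.
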